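(* Let $G$ and $G'$ be isomorphic cographs such that, for each of them, the set of robust modules ordered by reverse inclusion has no least element. Suppose $G=\Sigma C$ and $G'=\Sigma C'$ where $C=(I,\le,\ell)$ and $C'=(I',\le',\ell')$ are reduced labelled chains. Then there are infinite initial segments $W$ of $I$ and $W'$ of $I'$ and an isomorphism of labelled chains from $C_{\restriction W}$ onto $C'_{\restriction W'}$.
   Context: Graphs are undirected and loopless; a cograph is a graph with no induced subgraph isomorphic to the path $P_4$. For a graph $G$ with vertex set $V$, a module is a set $A\subseteq V$ such that for all $a,a'\in A$ and $b\in V\setminus A$, $ab$ is an edge iff $a'b$ is an edge; a module $A$ is strong if every module is either comparable to $A$ under inclusion or disjoint from it; a module is robust if it is a singleton or the intersection of all strong modules containing $\{x,y\}$ for some distinct vertices $x,y$. A labelled chain is $C=(I,\le,\ell)$ with $(I,\le)$ a chain and $\ell(i)=(G_i,r(i))$, $G_i$ a non-empty cograph and $r(i)\in\{0,1\}$. Its sum $\Sigma C$ is the disjoint union of the $G_i$ in which vertices of the same $G_i$ are adjacent as in $G_i$, and $x\in G_i$, $y\in G_j$ with $i<j$ are adjacent iff $r(i)=1$. The direct sum of graphs is their disjoint union with no edges between them; the complete sum is their disjoint union with all edges between distinct summands. $C$ is reduced if $(I,\le)$ is infinite; in every interval of $I$ with at least two elements both values $0$ and $1$ of $r$ occur; if $r(i)=0$ then $G_i$ is not a complete sum of at least two non-empty graphs; if $r(i)=1$ then $G_i$ is not a direct sum of at least two non-empty graphs; and if $i$ is the largest element of $I$ then $G_i$ is a direct sum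 or a complete sum of at least two single-vertex graphs. For $W\subseteq I$, $C_{\restriction W}=(W,\le,\ell_{\restriction W})$. An isomorphism of labelled chains $(I,\le,\ell)\to(I',\le',\ell')$ is an order isomorphism $h$ such that $G_i$ is isomorphic to $G'_{h(i)}$ and $r(i)=r'(h(i))$ for all $i$. *)

From Stdlib Require Import List.

Record graph := Graph { vert : Type; adj : vert -> vert -> Prop }.

Definition simple_graph (G : graph) : Prop :=
  (forall x y : vert G, adj G x y -> adj G y x) /\
  (forall x : vert G, ~ adj G x x).

Definition nonempty_graph (G : graph) : Prop := inhabited (vert G).

Definition P4_free (G : graph) : Prop :=
  ~ exists a b c d : vert G,
      a <> b /\ a <> c /\ a <> d /\ b <> c /\ b <> d /\ c <> d /\
      adj G a b /\ adj G b c /\ adj G c d /\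
      ~ adj G a c /\ ~ adj G a d /\ ~ adj G b d.

Definition cograph (G : graph) : Prop := simple_graph G /\ P4_free G.

Definition graph_iso (G H : graph) : Prop :=
  exists (f : vert G -> vert H) (g : vert H -> vert G),
    (forall x, g (f x) = x) /\ (forall y, f (g y) = y) /\
    (forall x y, adj G x y <-> adj H (f x) (f y)).

Definition vset (G : graph) := vert G -> Prop.

Definition subset {G : graph} (A B : vset G) : Prop := forall x, A x -> B x.

Definition is_module {G : graph} (A : vset G) : Prop :=
  forall a a' b, A a -> A a' -> ~ A b -> (adj G a b <-> adj G a' b).

Definition strong_module {G : graph} (A : vset G) : Prop :=
  is_module A /\
  forall B : vset G, is_module B ->
    subset A B \/ subset B A \/ (forall x, ~ (A x /\ B x)).

Definition robust_module {G : graph} (A : vset G) : Prop :=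
  (exists x, forall z, A z <-> z = x) \/
  (exists x y, x <> y /\
     forall z, A z <-> (forall M : vset G, strong_module M -> M x -> M y -> M z)).

(* the robust modules ordered by reverse inclusion have a least element,
   i.e. a robust module containing every robust module *)
Definition robust_has_least (G : graph) : Prop :=
  exists A : vset G, robust_module A /\
    forall B : vset G, robust_module B -> subset B A.

(* G is the direct (resp. complete) sum of at least two non-empty graphs:
   its vertex set is partitioned into at least two non-empty blocks
   (fibres of a surjection f onto an index type K with two distinct
   elements), with no (resp. all) edges between distinct blocks. *)
Definition sum_decomp (complete : bool) (G : graph) (K : Type)
    (f : vert G -> K) : Prop :=
  (forall k, exists x, f x = k) /\
  (exists k1 k2 : K, k1 <> k2) /\
  (forall x y, f x <> f y -> if complete then adj G x y else ~ adj G x y).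

Definition is_direct_sum2 (G : graph) : Prop :=
  exists (K : Type) (f : vert G -> K), sum_decomp false G K f.
Definition is_complete_sum2 (G : graph) : Prop :=
  exists (K : Type) (f : vert G -> K), sum_decomp true G K f.

(* same, with all summands single-vertex graphs (f injective) *)
Definition is_direct_sum_singletons (G : graph) : Prop :=
  exists (K : Type) (f : vert G -> K), sum_decomp false G K f /\
    (forall x y, f x = f y -> x = y).
Definition is_complete_sum_singletons (G : graph) : Prop :=
  exists (K : Type) (f : vert G -> K), sum_decomp true G K f /\
    (forall x y, f x = f y -> x = y).

Record lchain := LChain {
  idx : Type;
  cle : idx -> idx -> Prop;
  cG : idx -> graph;
  cr : idx -> bool }.

Definition clt (C : lchain) (i j : idx C) : Prop := cle C i j /\ i <> j.

Definition total_order {T : Type} (le : T -> T -> Prop) : Prop :=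
  (forall x, le x x) /\
  (forall x y, le x y -> le y x -> x = y) /\
  (forall x y z, le x y -> le y z -> le x z) /\
  (forall x y, le x y \/ le y x).

Definition labelled_chain (C : lchain) : Prop :=
  total_order (cle C) /\
  forall i, nonempty_graph (cG C i) /\ cograph (cG C i).

Definition sum_graph (C : lchain) : graph :=
  {| vert := { i : idx C & vert (cG C i) };
     adj := fun p q =>
       (exists (i : idx C) (x y : vert (cG C i)),
          p = existT _ i x /\ q = existT _ i y /\ adj (cG C i) x y) \/
       (clt C (projT1 p) (projT1 q) /\ cr C (projT1 p) = true) \/
       (clt C (projT1 q) (projT1 p) /\ cr C (projT1 q) = true) |}.

Definition infinite_set {T : Type} (W : T -> Prop) : Prop :=
  ~ exists l : list T, forall x, W x -> In x l.

Definition reduced (C : lchain) : Prop :=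
  labelled_chain C /\
  infinite_set (fun _ : idx C => True) /\
  (forall a b, clt C a b ->
     (exists x, cle C a x /\ cle C x b /\ cr C x = false) /\
     (exists y, cle C a y /\ cle C y b /\ cr C y = true)) /\
  (forall i, cr C i = false -> ~ is_complete_sum2 (cG C i)) /\
  (forall i, cr C i = true -> ~ is_direct_sum2 (cG C i)) /\
  (forall i, (forall j, cle C j i) ->
     is_direct_sum_singletons (cG C i) \/ is_complete_sum_singletons (cG C i)).

Definition initial_segment (C : lchain) (W : idx C -> Prop) : Prop :=
  forall i j, W j -> cle C i j -> W i.

Definition restrict (C : lchain) (W : idx C -> Prop) : lchain :=
  {| idx := { i : idx C | W i };
     cle := fun x y => cle C (proj1_sig x) (proj1_sig y);
     cG := fun x => cG C (proj1_sig x);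
     cr := fun x => cr C (proj1_sig x) |}.

Definition lchain_iso (C C' : lchain) (h : idx C -> idx C') : Prop :=
  (exists g : idx C' -> idx C, (forall i, g (h i) = i) /\ (forall j, h (g j) = j)) /\
  (forall i j, cle C i j <-> cle C' (h i) (h j)) /\
  (forall i, graph_iso (cG C i) (cG C' (h i)) /\ cr C i = cr C' (h i)).

From Stdlib Require Import List Bool Classical ProofIrrelevance Eqdep ClassicalEpsilon.

(* In the sum of a reduced chain D, a module meeting two fibres i < j contains every vertex
   of every fibre >= i: since r takes both values on every interval, no such vertex can be
   left out, and the last clause of reducedness deals with the top fibre.  Hence
   the intersection of the strong modules containing two vertices in distinct fibres is the
   upper set of the lower fibre.  An isomorphism of sums preserves these intersections, so
   it maps some upper set of C onto an upper set of C', and then every smaller upper set of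
   C onto a smaller upper set of C', monotonically.  Fibres are recovered from the upper
   sets below that level, so they correspond and are isomorphic, and r is read off from
   adjacency to the fibres above.  Without a least robust module the chains have no least
   element, so the segments below the chosen level are infinite. *)

Definition idx_of {D : lchain} (p : vert (sum_graph D)) : idx D := projT1 p.

Definition vertex_at {D : lchain} (i : idx D) (x : vert (cG D i)) : vert (sum_graph D) :=
  existT (fun j => vert (cG D j)) i x.

Section ChainOrder.
Variable D : lchain.
Hypothesis HT : total_order (cle D).

Lemma clt_irrefl i : ~ clt D i i.
Proof. intros [_ N]. exact (N eq_refl). Qed.

Lemma clt_cle i j : clt D i j -> cle D i j.
Proof. intros [H _]. exact H. Qed.

Lemma cle_clt_trans i j k : cle D i j -> clt D j k -> clt D i k.
Proof.
  destruct HT as [_ [As [Tr _]]]. intros Hij [Hjk N].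
  split; [eauto|]. intros <-. apply N, As; auto.
Qed.

Lemma clt_cle_trans i j k : clt D i j -> cle D j k -> clt D i k.
Proof.
  destruct HT as [_ [As [Tr _]]]. intros [Hij N] Hjk.
  split; [eauto|]. intros <-. apply N, As; auto.
Qed.

Lemma clt_trans i j k : clt D i j -> clt D j k -> clt D i k.
Proof. intros Hij Hjk. exact (cle_clt_trans i j k (clt_cle i j Hij) Hjk). Qed.

Lemma clt_total i j : clt D i j \/ i = j \/ clt D j i.
Proof.
  destruct HT as [_ [_ [_ Tot]]].
  destruct (classic (i = j)) as [E|N]; [auto|].
  destruct (Tot i j); [left|right; right]; split; auto.
Qed.

Lemma clt_iff_not_cle i j : clt D i j <-> ~ cle D j i.
Proof.
  split.
  - intros Hij Hji. exact (clt_irrefl i (clt_cle_trans i j i Hij Hji)).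
  - intro N. destruct (clt_total i j) as [H|[<-|H]]; [exact H| |];
      exfalso; apply N; [apply HT | exact (clt_cle j i H)].
Qed.

Lemma cle_iff_not_clt i j : cle D i j <-> ~ clt D j i.
Proof. rewrite clt_iff_not_cle. split; [tauto | apply NNPP]. Qed.

Lemma infinite_below (NoLeast : forall i, exists j, clt D j i) i :
  infinite_set (fun j => clt D j i).
Proof.
  assert (Avoid : forall (l : list (idx D)) i, exists j, clt D j i /\ ~ In j l).
  { induction l as [|a l IH]; intro i'.
    - destruct (NoLeast i') as [j Hj]. eauto.
    - destruct (IH i') as [j [Hj Nj]].
      destruct (classic (j = a)) as [->|Na]; [|exists j; simpl; intuition].
      destruct (IH a) as [j' [Hj' Nj']]. exists j'. split; [exact (clt_trans _ _ _ Hj' Hj)|].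
      intros [E|Inj']; [subst; exact (clt_irrefl _ Hj') | exact (Nj' Inj')]. }
  intros [l Hl]. destruct (Avoid l i) as [j [Hj Nj]]. exact (Nj (Hl j Hj)).
Qed.

End ChainOrder.

Section ReducedChain.
Variable D : lchain.
Hypothesis HD : reduced D.

Lemma reduced_total : total_order (cle D).
Proof. exact (proj1 (proj1 HD)). Qed.

Lemma fibre_nonempty i : exists p : vert (sum_graph D), idx_of p = i.
Proof.
  destruct (proj1 (proj2 (proj1 HD) i)) as [x]. exists (vertex_at i x). reflexivity.
Qed.

Lemma fibre_adj_sym i x y : adj (cG D i) x y -> adj (cG D i) y x.
Proof. destruct (proj2 (proj2 (proj1 HD) i)) as [[Sym _] _]. apply Sym. Qed.

Lemma exists_other_idx (i : idx D) : exists j, j <> i.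
Proof.
  destruct HD as [_ [Inf _]]. apply NNPP. intro N. apply Inf. exists (i :: nil).
  intros j _. left. apply NNPP. intro E. apply N. exists j. auto.
Qed.

Lemma exists_two_idx : exists i j : idx D, i <> j.
Proof.
  destruct (classic (exists i : idx D, True)) as [[i _]|N].
  - destruct (exists_other_idx i) as [j Hj]. eauto.
  - exfalso. destruct HD as [_ [Inf _]]. apply Inf. exists nil. intros i _. apply N. eauto.
Qed.

Lemma exists_flip_between i j :
  clt D i j -> cr D i = cr D j -> exists s, clt D i s /\ clt D s j /\ cr D s <> cr D i.
Proof.
  intros Hij E. destruct HD as [_ [_ [Between _]]].
  destruct (Between i j Hij) as [[x [Hix [Hxj Ex]]] [y [Hiy [Hyj Ey]]]].
  destruct (cr D i) eqn:Ei; [exists x | exists y]; repeat split; try congruence;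
    intros <-; congruence.
Qed.

Lemma top_fibre_adj i x y :
  (forall j, cle D j i) -> x <> y -> (adj (cG D i) x y <-> cr D i = true).
Proof.
  intros Top Nxy. destruct HD as [_ [_ [_ [NoComplete [NoDirect TopSum]]]]].
  destruct (TopSum i Top) as [[K [f [[Sur [Two Sep]] Inj]]]|[K [f [[Sur [Two Sep]] Inj]]]];
    assert (Nf : f x <> f y) by (intro E; exact (Nxy (Inj x y E)));
    pose proof (Sep x y Nf) as Sxy; simpl in Sxy; destruct (cr D i) eqn:Ei.
  - exfalso. apply (NoDirect i Ei). exists K, f. exact (conj Sur (conj Two Sep)).
  - split; [tauto | discriminate].
  - tauto.
  - exfalso. apply (NoComplete i Ei). exists K, f. exact (conj Sur (conj Two Sep)).
Qed.

End ReducedChain.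

Lemma vertex_at_inj D (i : idx D) (x y : vert (cG D i)) : vertex_at i x = vertex_at i y -> x = y.
Proof. exact (inj_pair2 _ _ i x y). Qed.

Lemma adj_vertex_at D (i : idx D) (x y : vert (cG D i)) :
  adj (sum_graph D) (vertex_at i x) (vertex_at i y) <-> adj (cG D i) x y.
Proof.
  split.
  - intros [[j [a [b [E1 [E2 H]]]]] | [[H _] | [H _]]];
      [| exfalso; exact (clt_irrefl D i H) ..].
    assert (j = i) as -> by exact (f_equal (@projT1 _ _) (eq_sym E1)).
    apply vertex_at_inj in E1. apply vertex_at_inj in E2. subst. exact H.
  - intro H. left. exists i, x, y. auto.
Qed.

Lemma sum_adj_sym D : reduced D -> forall p q, adj (sum_graph D) p q -> adj (sum_graph D) q p.
Proof.
  intros HD p q [[i [x [y [-> [-> H]]]]] | [H|H]].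
  - left. exists i, y, x. repeat split. exact (fibre_adj_sym D HD i x y H).
  - right; right. exact H.
  - right; left. exact H.
Qed.

Section CrossAdjacency.
Variable D : lchain.
Hypothesis HT : total_order (cle D).
Variables p q : vert (sum_graph D).
Hypothesis Hpq : clt D (idx_of p) (idx_of q).

Lemma adj_cross_up : adj (sum_graph D) p q <-> cr D (idx_of p) = true.
Proof.
  split.
  - intros [[j [a [b [-> [-> _]]]]] | [[_ H] | [H _]]].
    + exfalso. exact (clt_irrefl D j Hpq).
    + exact H.
    + exfalso. exact (proj1 (clt_iff_not_cle D HT _ _) H (clt_cle D _ _ Hpq)).
  - intro H. right; left. auto.
Qed.

Lemma adj_cross_down : adj (sum_graph D) q p <-> cr D (idx_of p) = true.
Proof.
  split.
  - intros [[j [a [b [-> [-> _]]]]] | [[H _] | [_ H]]].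
    + exfalso. exact (clt_irrefl D j Hpq).
    + exfalso. exact (proj1 (clt_iff_not_cle D HT _ _) H (clt_cle D _ _ Hpq)).
    + exact H.
  - intro H. right; right. auto.
Qed.

End CrossAdjacency.

Lemma adj_top_fibre D (HD : reduced D) (p q : vert (sum_graph D)) :
  (forall j, cle D j (idx_of p)) -> idx_of q = idx_of p -> p <> q ->
  (adj (sum_graph D) p q <-> cr D (idx_of p) = true).
Proof.
  destruct p as [i x], q as [i' y]. unfold idx_of; simpl. intros Top -> Npq.
  refine (iff_trans (adj_vertex_at D i x y) (top_fibre_adj D HD i x y Top _)).
  intros <-. exact (Npq eq_refl).
Qed.

Section ModulesOfSum.
Variable D : lchain.
Hypothesis HD : reduced D.
Variable B : vset (sum_graph D).
Hypothesis HB : is_module B.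

Let HT := reduced_total D HD.

Lemma module_cr_between a b z :
  B a -> B b -> ~ B z -> clt D (idx_of a) (idx_of z) -> clt D (idx_of z) (idx_of b) ->
  cr D (idx_of a) = cr D (idx_of z).
Proof.
  intros Ba Bb Nz Haz Hzb. apply eq_true_iff_eq.
  rewrite <- (adj_cross_up D HT a z Haz), <- (adj_cross_down D HT z b Hzb).
  exact (HB a b z Ba Bb Nz).
Qed.

Lemma module_cr_below a w z :
  B a -> B w -> ~ B z -> clt D (idx_of a) (idx_of w) -> clt D (idx_of w) (idx_of z) ->
  cr D (idx_of a) = cr D (idx_of w).
Proof.
  intros Ba Bw Nz Haw Hwz. apply eq_true_iff_eq.
  rewrite <- (adj_cross_up D HT a z (clt_trans D HT _ _ _ Haw Hwz)),
          <- (adj_cross_up D HT w z Hwz).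
  exact (HB a w z Ba Bw Nz).
Qed.

Lemma module_fills_between a b z :
  B a -> B b -> clt D (idx_of a) (idx_of z) -> clt D (idx_of z) (idx_of b) -> B z.
Proof.
  intros Ba Bb Haz Hzb. apply NNPP. intro Nz.
  destruct (exists_flip_between D HD _ _ Haz (module_cr_between a b z Ba Bb Nz Haz Hzb))
    as [s [Has [Hsz Ns]]].
  destruct (fibre_nonempty D HD s) as [w <-].
  destruct (classic (B w)) as [Bw|Nw]; apply Ns; symmetry.
  - exact (module_cr_below a w z Ba Bw Nz Has Hsz).
  - exact (module_cr_between a b w Ba Bb Nw Has (clt_trans D HT _ _ _ Hsz Hzb)).
Qed.

Lemma module_fills_above a b z :
  B a -> B b -> clt D (idx_of a) (idx_of b) -> clt D (idx_of b) (idx_of z) -> B z.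
Proof.
  intros Ba Bb Hab Hbz. apply NNPP. intro Nz.
  destruct (exists_flip_between D HD _ _ Hab (module_cr_below a b z Ba Bb Nz Hab Hbz))
    as [s [Has [Hsb Ns]]].
  destruct (fibre_nonempty D HD s) as [w <-].
  pose proof (module_fills_between a b w Ba Bb Has Hsb) as Bw.
  exact (Ns (eq_sym (module_cr_below a w z Ba Bw Nz Has (clt_trans D HT _ _ _ Hsb Hbz)))).
Qed.

Lemma module_fills_fibre a b z :
  B a -> B b -> clt D (idx_of a) (idx_of b) -> idx_of z = idx_of b -> B z.
Proof.
  intros Ba Bb Hab Ez. apply NNPP. intro Nz.
  assert (Haz : clt D (idx_of a) (idx_of z)) by (rewrite Ez; exact Hab).
  assert (Ncr : cr D (idx_of a) <> cr D (idx_of z)).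
  { intro E. destruct (exists_flip_between D HD _ _ Haz E) as [s [Has [Hsz Ns]]].
    destruct (fibre_nonempty D HD s) as [w <-].
    assert (Bw : B w) by (rewrite Ez in Hsz; exact (module_fills_between a b w Ba Bb Has Hsz)).
    exact (Ns (eq_sym (module_cr_below a w z Ba Bw Nz Has Hsz))). }
  apply Ncr, eq_true_iff_eq. rewrite <- (adj_cross_up D HT a z Haz).
  destruct (classic (exists m, clt D (idx_of b) m)) as [[m Hbm]|NoAbove].
  - destruct (fibre_nonempty D HD m) as [w <-].
    assert (Hzw : clt D (idx_of z) (idx_of w)) by (rewrite Ez; exact Hbm).
    rewrite <- (adj_cross_down D HT z w Hzw).
    apply (HB a w z Ba (module_fills_above a b w Ba Bb Hab Hbm) Nz).
  - assert (Top : forall j, cle D j (idx_of b)).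
    { intro j. apply (cle_iff_not_clt D HT). intro H. apply NoAbove. eauto. }
    rewrite Ez, <- (adj_top_fibre D HD b z Top Ez).
    + apply (HB a b z Ba Bb Nz).
    + intros ->. exact (Nz Bb).
Qed.

Lemma module_upward_closed a b z :
  B a -> B b -> clt D (idx_of a) (idx_of b) -> clt D (idx_of a) (idx_of z) -> B z.
Proof.
  intros Ba Bb Hab Haz.
  destruct (clt_total D HT (idx_of z) (idx_of b)) as [H|[H|H]].
  - exact (module_fills_between a b z Ba Bb Haz H).
  - exact (module_fills_fibre a b z Ba Bb Hab H).
  - exact (module_fills_above a b z Ba Bb Hab H).
Qed.

End ModulesOfSum.

Definition upper (D : lchain) (i : idx D) : vset (sum_graph D) :=
  fun v => cle D i (idx_of v).

Definition strong_span (G : graph) (x y : vert G) : vset G :=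
  fun z => forall M : vset G, strong_module M -> M x -> M y -> M z.

Lemma strong_span_sym G x y z : strong_span G x y z -> strong_span G y x z.
Proof. intros H M SM My Mx. exact (H M SM Mx My). Qed.

Section UpperSets.
Variable D : lchain.
Hypothesis HD : reduced D.

Let HT := reduced_total D HD.

Lemma upper_module i : is_module (upper D i).
Proof.
  intros a a' b Ha Ha' Nb. unfold upper in *.
  assert (Hb : clt D (idx_of b) i) by (apply (clt_iff_not_cle D HT); exact Nb).
  rewrite (adj_cross_down D HT b a (clt_cle_trans D HT _ _ _ Hb Ha)),
          (adj_cross_down D HT b a' (clt_cle_trans D HT _ _ _ Hb Ha')).
  tauto.
Qed.

Lemma upper_strong i : strong_module (upper D i).
Proof.
  split; [exact (upper_module i)|]. intros B HB.
  destruct (classic (exists q, B q /\ ~ upper D i q)) as [[q [Bq Nq]]|AllUp].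
  - destruct (classic (exists p, B p /\ upper D i p)) as [[p [Bp Up]]|NoneUp].
    + left. intros z Uz. unfold upper in *.
      assert (Hq : clt D (idx_of q) i) by (apply (clt_iff_not_cle D HT); exact Nq).
      exact (module_upward_closed D HD B HB q p z Bq Bp
               (clt_cle_trans D HT _ _ _ Hq Up) (clt_cle_trans D HT _ _ _ Hq Uz)).
    + right; right. intros v [Uv Bv]. eauto.
  - right; left. intros v Bv. apply NNPP. intro Nv. eauto.
Qed.

Lemma fibre_complement_module (M : vset (sum_graph D)) i y :
  is_module M -> M y -> clt D i (idx_of y) ->
  is_module (fun v => clt D i (idx_of v) \/ (idx_of v = i /\ ~ M v)).
Proof.
  intros HM My Hiy.
  set (B := fun v => clt D i (idx_of v) \/ (idx_of v = i /\ ~ M v)).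
  assert (Seen : forall q, ~ B q -> forall p, B p ->
            (adj (sum_graph D) p q <-> cr D (idx_of q) = true)).
  { intros q Nq p Bp.
    destruct (clt_total D HT (idx_of q) i) as [Hq|[Hq|Hq]]; [| |exfalso; apply Nq; left; exact Hq].
    - apply adj_cross_down; [exact HT|].
      destruct Bp as [Hp|[<- _]]; [exact (clt_trans D HT _ _ _ Hq Hp) | exact Hq].
    - assert (Mq : M q) by (apply NNPP; intro; apply Nq; right; auto).
      destruct Bp as [Hp|[Ep Np]]; [rewrite <- Hq in Hp; exact (adj_cross_down D HT q p Hp)|].
      assert (Hpy : clt D (idx_of p) (idx_of y)) by (rewrite Ep; exact Hiy).
      rewrite Hq, <- Ep, <- (adj_cross_down D HT p y Hpy).
      split; intro H.
      + apply (HM q y p Mq My Np), sum_adj_sym; auto.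
      + apply sum_adj_sym, (HM q y p Mq My Np); auto. }
  intros p p' q Bp Bp' Nq. rewrite (Seen q Nq p Bp), (Seen q Nq p' Bp'). tauto.
Qed.

(* If [M] missed [z], the module of [fibre_complement_module] would overlap [M] in [y]
   without being comparable to it. *)
Lemma strong_module_fills_fibre (M : vset (sum_graph D)) x y z :
  strong_module M -> M x -> M y -> clt D (idx_of x) (idx_of y) -> idx_of z = idx_of x -> M z.
Proof.
  intros [HM SM] Mx My Hxy Ez. apply NNPP. intro Nz.
  destruct (SM _ (fibre_complement_module M (idx_of x) y HM My Hxy)) as [S|[S|S]].
  - destruct (S x Mx) as [H|[_ H]]; [exact (clt_irrefl D _ H) | exact (H Mx)].
  - exact (Nz (S z (or_intror (conj Ez Nz)))).
  - exact (S y (conj My (or_introl Hxy))).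
Qed.

Lemma strong_span_upper x y z :
  clt D (idx_of x) (idx_of y) -> (strong_span _ x y z <-> upper D (idx_of x) z).
Proof.
  intro Hxy. split.
  - intro H. apply (H _ (upper_strong (idx_of x))); [apply HT | exact (clt_cle D _ _ Hxy)].
  - intros Uz M SM Mx My.
    destruct (clt_total D HT (idx_of x) (idx_of z)) as [H|[H|H]].
    + exact (module_upward_closed D HD M (proj1 SM) x y z Mx My Hxy H).
    + exact (strong_module_fills_fibre M x y z SM Mx My Hxy (eq_sym H)).
    + exfalso. exact (proj1 (clt_iff_not_cle D HT _ _) H Uz).
Qed.

Lemma strong_span_upper_exists x y :
  idx_of x <> idx_of y -> exists i, forall z, strong_span _ x y z <-> upper D i z.
Proof.
  intro Nxy. destruct (clt_total D HT (idx_of x) (idx_of y)) as [H|[H|H]]; [|contradiction|].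
  - exists (idx_of x). intro z. exact (strong_span_upper x y z H).
  - exists (idx_of y). intro z. rewrite <- (strong_span_upper y x z H).
    split; apply strong_span_sym.
Qed.

End UpperSets.

Definition iso_pair (G H : graph) (f : vert G -> vert H) (g : vert H -> vert G) : Prop :=
  (forall x, g (f x) = x) /\ (forall y, f (g y) = y) /\
  (forall x y, adj G x y <-> adj H (f x) (f y)).

Lemma iso_pair_sym G H f g : iso_pair G H f g -> iso_pair H G g f.
Proof.
  intros [gf [fg Hadj]]. split; [exact fg|]. split; [exact gf|].
  intros x y. rewrite Hadj, !fg. tauto.
Qed.

Lemma iso_pair_comp G H K f g f' g' :
  iso_pair G H f g -> iso_pair H K f' g' ->
  iso_pair G K (fun x => f' (f x)) (fun z => g (g' z)).
Proof.
  intros [gf [fg Hadj]] [gf' [fg' Hadj']]. split; [|split].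
  - intro x. rewrite gf', gf. reflexivity.
  - intro z. rewrite fg, fg'. reflexivity.
  - intros x y. rewrite Hadj, Hadj'. tauto.
Qed.

Lemma module_preimage G H f g (M : vset H) :
  iso_pair G H f g -> is_module M -> is_module (fun v => M (f v)).
Proof.
  intros [_ [_ Hadj]] HM a a' b Ma Ma' Nb. rewrite !Hadj. exact (HM _ _ _ Ma Ma' Nb).
Qed.

Lemma strong_module_preimage G H f g (M : vset H) :
  iso_pair G H f g -> strong_module M -> strong_module (fun v => M (f v)).
Proof.
  intros Hiso [HM SM]. split; [exact (module_preimage G H f g M Hiso HM)|].
  intros N HN. pose proof Hiso as [gf _].
  destruct (SM _ (module_preimage H G g f N (iso_pair_sym G H f g Hiso) HN)) as [S|[S|S]].
  - left. intros v Mv. rewrite <- (gf v). exact (S _ Mv).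
  - right; left. intros v Nv. apply S. rewrite gf. exact Nv.
  - right; right. intros v [Mv Nv]. apply (S (f v)). rewrite gf. auto.
Qed.

Lemma strong_span_iso G H f g (Hiso : iso_pair G H f g) x y z :
  strong_span G x y z <-> strong_span H (f x) (f y) (f z).
Proof.
  split.
  - intros Hs M SM. exact (Hs _ (strong_module_preimage G H f g M Hiso SM)).
  - intros Hs N SN Nx Ny. pose proof Hiso as [gf _].
    pose proof (strong_module_preimage H G g f N (iso_pair_sym G H f g Hiso) SN) as S.
    rewrite <- (gf z). apply (Hs _ S); simpl; rewrite gf; assumption.
Qed.

(* If [i] were least, the strong span of a vertex of fibre [i] and one of another fibre
   would be the whole vertex set: a robust module containing every robust module. *)
Lemma no_least_idx G D f g :
  reduced D -> iso_pair G (sum_graph D) f g -> ~ robust_has_least G ->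
  forall i, exists j, clt D j i.
Proof.
  intros HD Hiso NoLeast i. apply NNPP. intro N.
  assert (Least : forall j, cle D i j).
  { intro j. apply (cle_iff_not_clt D (reduced_total D HD)). intro. apply N. eauto. }
  destruct (exists_other_idx D HD i) as [j Hj].
  destruct (fibre_nonempty D HD i) as [x Hx], (fibre_nonempty D HD j) as [y Hy].
  pose proof Hiso as [gf [fg _]].
  apply NoLeast. exists (fun _ => True). split; [|intros B _ v _; exact I].
  right. exists (g x), (g y). split.
  - intro E. apply Hj. rewrite <- Hx, <- Hy, <- (fg x), <- (fg y), E. reflexivity.
  - intro z. split; [intros _|auto].
    apply (strong_span_iso G _ f g Hiso). rewrite !fg.
    assert (Hxy : clt D (idx_of x) (idx_of y)).
    { rewrite Hx, Hy. split; [apply Least | congruence]. }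
    apply (strong_span_upper D HD x y _ Hxy). unfold upper. rewrite Hx. apply Least.
Qed.

Definition maps_upper (C C' : lchain) (phi : vert (sum_graph C) -> vert (sum_graph C'))
    (i : idx C) (k : idx C') : Prop :=
  forall u, upper C i u <-> upper C' k (phi u).

Lemma maps_upper_reflects_cle C C' phi i k j m :
  reduced C -> total_order (cle C') ->
  maps_upper C C' phi i k -> maps_upper C C' phi j m -> cle C' k m -> cle C i j.
Proof.
  intros HC [_ [_ [Tr' _]]] Hik Hjm Hkm.
  destruct (fibre_nonempty C HC j) as [u <-].
  apply Hik, (Tr' _ _ _ Hkm), Hjm. apply (reduced_total C HC).
Qed.

Section UpperCorrespondence.
Variables C C' : lchain.
Hypotheses (HC : reduced C) (HC' : reduced C').
Variables (phi : vert (sum_graph C) -> vert (sum_graph C'))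
          (psi : vert (sum_graph C') -> vert (sum_graph C)).
Hypothesis Hiso : iso_pair (sum_graph C) (sum_graph C') phi psi.

Let HT := reduced_total C HC.
Let HT' := reduced_total C' HC'.

Lemma maps_upper_swap i k : maps_upper C C' phi i k <-> maps_upper C' C psi k i.
Proof.
  destruct Hiso as [gf [fg _]]. split; intros H w.
  - rewrite (H (psi w)), fg. tauto.
  - rewrite (H (phi w)), gf. tauto.
Qed.

Lemma maps_upper_of_span x y i k :
  (forall z, strong_span _ x y z <-> upper C i z) ->
  (forall z, strong_span _ (phi x) (phi y) z <-> upper C' k z) ->
  maps_upper C C' phi i k.
Proof. intros S S' u. rewrite <- S, <- S'. exact (strong_span_iso _ _ phi psi Hiso x y u). Qed.

(* Otherwise [phi] would send all of the sum of [C] into a single fibre. *)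
Lemma split_pair_exists :
  exists x y, idx_of x <> idx_of y /\ idx_of (phi x) <> idx_of (phi y).
Proof.
  apply NNPP. intro N.
  assert (Collapse : forall u v, idx_of u <> idx_of v -> idx_of (phi u) = idx_of (phi v)).
  { intros u v Nuv. apply NNPP. intro. apply N. eauto. }
  assert (Const : forall u v, idx_of (phi u) = idx_of (phi v)).
  { intros u v. destruct (classic (idx_of u = idx_of v)) as [E|Nuv]; [|exact (Collapse u v Nuv)].
    destruct (exists_other_idx C HC (idx_of u)) as [t Ht].
    destruct (fibre_nonempty C HC t) as [w <-].
    rewrite (Collapse u w), (Collapse v w); congruence. }
  destruct (exists_two_idx C' HC') as [k1 [k2 Nk]].
  destruct (fibre_nonempty C' HC' k1) as [y1 <-], (fibre_nonempty C' HC' k2) as [y2 <-].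
  destruct Hiso as [_ [fg _]]. apply Nk. rewrite <- (fg y1), <- (fg y2). apply Const.
Qed.

Lemma maps_upper_exists : exists i k, maps_upper C C' phi i k.
Proof.
  destruct split_pair_exists as [x [y [Nxy Nxy']]].
  destruct (strong_span_upper_exists C HC x y Nxy) as [i Si].
  destruct (strong_span_upper_exists C' HC' _ _ Nxy') as [k Sk].
  exists i, k. exact (maps_upper_of_span x y i k Si Sk).
Qed.

(* The strong span of vertices of fibres j < i is the upper set of j, and its image is the
   strong span of the images, whose lower fibre lies strictly below k. *)
Lemma maps_upper_down i k j :
  maps_upper C C' phi i k -> clt C j i -> exists m, clt C' m k /\ maps_upper C C' phi j m.
Proof.
  intros Hik Hji.
  destruct (fibre_nonempty C HC i) as [x Hx], (fibre_nonempty C HC j) as [y Hy].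
  assert (Hyx : clt C (idx_of y) (idx_of x)) by congruence.
  assert (Hmk : clt C' (idx_of (phi y)) k).
  { apply (clt_iff_not_cle C' HT'). intro Up. apply (proj2 (Hik y)) in Up.
    unfold upper in Up. rewrite Hy in Up. exact (proj1 (clt_iff_not_cle C HT _ _) Hji Up). }
  assert (Hkx : cle C' k (idx_of (phi x))) by (apply Hik; unfold upper; rewrite Hx; apply HT).
  exists (idx_of (phi y)). split; [exact Hmk|]. rewrite <- Hy.
  apply (maps_upper_of_span y x).
  - intro z. exact (strong_span_upper C HC y x z Hyx).
  - intro z. exact (strong_span_upper C' HC' _ _ z (clt_cle_trans C' HT' _ _ _ Hmk Hkx)).
Qed.

Lemma maps_upper_cle i k j m :
  maps_upper C C' phi i k -> maps_upper C C' phi j m -> (cle C i j <-> cle C' k m).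
Proof.
  intros Hik Hjm. split; [|exact (maps_upper_reflects_cle C C' phi i k j m HC HT' Hik Hjm)].
  apply (maps_upper_reflects_cle C' C psi k i m j HC' HT); apply maps_upper_swap; assumption.
Qed.

Lemma maps_upper_clt i k j m :
  maps_upper C C' phi i k -> maps_upper C C' phi j m -> (clt C i j <-> clt C' k m).
Proof.
  intros Hik Hjm. rewrite (clt_iff_not_cle C HT), (clt_iff_not_cle C' HT').
  rewrite (maps_upper_cle j m i k Hjm Hik). tauto.
Qed.

Lemma maps_upper_fibre_into i k i1 k1 :
  maps_upper C C' phi i k -> maps_upper C C' phi i1 k1 -> clt C i i1 ->
  (forall m, clt C' m k1 -> exists j, maps_upper C C' phi j m) ->
  forall u, idx_of u = i -> idx_of (phi u) = k.
Proof.
  intros Hik Hi1k1 Hii1 Below u Hu.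
  assert (Hk : cle C' k (idx_of (phi u))) by (apply Hik; unfold upper; rewrite Hu; apply HT).
  destruct (clt_total C' HT' k (idx_of (phi u))) as [Hlt|[E|Hgt]]; [exfalso | auto |].
  - destruct (classic (clt C' (idx_of (phi u)) k1)) as [Hm|Hm].
    + destruct (Below _ Hm) as [j Hj].
      assert (Hji : cle C j i) by (rewrite <- Hu; apply Hj; apply HT').
      apply (proj2 (maps_upper_clt i k j _ Hik Hj)) in Hlt.
      exact (proj1 (clt_iff_not_cle C HT _ _) Hlt Hji).
    + assert (Hi1 : cle C i1 i).
      { rewrite <- Hu. apply Hi1k1. apply (cle_iff_not_clt C' HT'). exact Hm. }
      exact (proj1 (clt_iff_not_cle C HT _ _) Hii1 Hi1).
  - exfalso. exact (proj1 (clt_iff_not_cle C' HT' _ _) Hgt Hk).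
Qed.

Lemma maps_upper_cr i k i1 k1 u :
  maps_upper C C' phi i1 k1 -> clt C i i1 -> clt C' k k1 ->
  idx_of u = i -> idx_of (phi u) = k -> cr C i = cr C' k.
Proof.
  intros Hi1k1 Hi Hk Hu Hpu. destruct (fibre_nonempty C HC i1) as [v Hv].
  assert (Huv : clt C (idx_of u) (idx_of v)) by congruence.
  assert (Hpv : clt C' (idx_of (phi u)) (idx_of (phi v))).
  { rewrite Hpu. apply (clt_cle_trans C' HT' _ _ _ Hk).
    apply Hi1k1. unfold upper. rewrite Hv. apply HT. }
  rewrite <- Hu, <- Hpu. apply eq_true_iff_eq.
  rewrite <- (adj_cross_up C HT u v Huv), <- (adj_cross_up C' HT' _ _ Hpv).
  apply Hiso.
Qed.

End UpperCorrespondence.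

Definition fibre_coord (D : lchain) (k : idx D) (p : vert (sum_graph D)) (e : idx_of p = k) :
    vert (cG D k) :=
  eq_rect (idx_of p) (fun j => vert (cG D j)) (projT2 p) k e.

Lemma vertex_at_fibre_coord D k p e : vertex_at k (fibre_coord D k p e) = p.
Proof. destruct p as [j v]. unfold idx_of in e. simpl in e. subst. reflexivity. Qed.

Lemma fibre_iso C C' phi psi i k :
  iso_pair (sum_graph C) (sum_graph C') phi psi ->
  (forall u, idx_of u = i <-> idx_of (phi u) = k) -> graph_iso (cG C i) (cG C' k).
Proof.
  intros [gf [fg Hadj]] Fib.
  assert (e1 : forall x, idx_of (phi (vertex_at i x)) = k) by (intro x; apply Fib; reflexivity).
  assert (e2 : forall y, idx_of (psi (vertex_at k y)) = i)
    by (intro y; apply Fib; rewrite fg; reflexivity).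
  exists (fun x => fibre_coord C' k _ (e1 x)), (fun y => fibre_coord C i _ (e2 y)).
  split; [|split].
  - intro x. apply vertex_at_inj. rewrite !vertex_at_fibre_coord. apply gf.
  - intro y. apply vertex_at_inj. rewrite !vertex_at_fibre_coord. apply fg.
  - intros x y. rewrite <- adj_vertex_at, <- (adj_vertex_at C'), !vertex_at_fibre_coord.
    apply Hadj.
Qed.

Lemma maps_upper_fibre C C' phi psi i k i1 k1 :
  reduced C -> reduced C' -> iso_pair (sum_graph C) (sum_graph C') phi psi ->
  maps_upper C C' phi i k -> maps_upper C C' phi i1 k1 -> clt C i i1 -> clt C' k k1 ->
  (forall j, clt C j i1 -> exists m, maps_upper C C' phi j m) ->
  (forall m, clt C' m k1 -> exists j, maps_upper C C' phi j m) ->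
  forall u, idx_of u = i <-> idx_of (phi u) = k.
Proof.
  intros HC HC' Hiso Hik Hi1k1 Hi Hk Below Below' u.
  pose proof Hiso as [gf _].
  pose proof (maps_upper_swap C C' phi psi Hiso) as Swap.
  split.
  - exact (maps_upper_fibre_into C C' HC HC' phi psi Hiso i k i1 k1 Hik Hi1k1 Hi Below' u).
  - rewrite <- (gf u) at 2.
    apply (maps_upper_fibre_into C' C HC' HC psi phi (iso_pair_sym _ _ _ _ Hiso) k i k1 i1);
      [apply Swap; exact Hik | apply Swap; exact Hi1k1 | exact Hk |].
    intros j Hj. destruct (Below j Hj) as [m Hjm]. exists m. apply Swap. exact Hjm.
Qed.

Lemma restrict_total_order D W : total_order (cle D) -> total_order (cle (restrict D W)).
Proof.
  intros [Refl [As [Tr Tot]]]. split; [|split; [|split]]; simpl.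
  - intro x. apply Refl.
  - intros [x px] [y py] Hxy Hyx. apply subset_eq_compat. exact (As _ _ Hxy Hyx).
  - intros x y z. apply Tr.
  - intros x y. apply Tot.
Qed.

Lemma lchain_iso_of_rel (D D' : lchain) (R : idx D -> idx D' -> Prop) :
  total_order (cle D) -> total_order (cle D') ->
  (forall i, exists k, R i k) -> (forall k, exists i, R i k) ->
  (forall i k j m, R i k -> R j m -> (cle D i j <-> cle D' k m)) ->
  (forall i k, R i k -> graph_iso (cG D i) (cG D' k) /\ cr D i = cr D' k) ->
  exists h, lchain_iso D D' h.
Proof.
  intros [Refl [As _]] [Refl' [As' _]] Left Right Mono Label.
  destruct (choice R Left) as [h Hh].
  destruct (choice (fun k i => R i k) Right) as [g Hg].
  exists h. split; [exists g; split|split].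
  - intro i. pose proof (Mono _ _ _ _ (Hg (h i)) (Hh i)) as M1.
    pose proof (Mono _ _ _ _ (Hh i) (Hg (h i))) as M2.
    apply As; [apply M1 | apply M2]; apply Refl'.
  - intro k. pose proof (Mono _ _ _ _ (Hh (g k)) (Hg k)) as M1.
    pose proof (Mono _ _ _ _ (Hg k) (Hh (g k))) as M2.
    apply As'; [apply M1 | apply M2]; apply Refl.
  - intros i j. exact (Mono _ _ _ _ (Hh i) (Hh j)).
  - intro i. exact (Label _ _ (Hh i)).
Qed.

Lemma lchain_iso_below C C' phi psi i1 k1 :
  reduced C -> reduced C' -> iso_pair (sum_graph C) (sum_graph C') phi psi ->
  maps_upper C C' phi i1 k1 ->
  exists h, lchain_iso (restrict C (fun i => clt C i i1)) (restrict C' (fun k => clt C' k k1)) h.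
Proof.
  intros HC HC' Hiso Hi1k1.
  pose proof (maps_upper_swap C C' phi psi Hiso) as Swap.
  assert (Down : forall i, clt C i i1 -> exists k, clt C' k k1 /\ maps_upper C C' phi i k).
  { intros i Hi. exact (maps_upper_down C C' HC HC' phi psi Hiso i1 k1 i Hi1k1 Hi). }
  assert (Down' : forall k, clt C' k k1 -> exists i, clt C i i1 /\ maps_upper C C' phi i k).
  { intros k Hk.
    destruct (maps_upper_down C' C HC' HC psi phi (iso_pair_sym _ _ _ _ Hiso) k1 i1 k
                (proj1 (Swap i1 k1) Hi1k1) Hk) as [i [Hi Hki]].
    exists i. split; [exact Hi | apply Swap; exact Hki]. }
  apply (lchain_iso_of_rel (restrict C _) (restrict C' _)
           (fun s t => maps_upper C C' phi (proj1_sig s) (proj1_sig t))).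
  - exact (restrict_total_order C _ (reduced_total C HC)).
  - exact (restrict_total_order C' _ (reduced_total C' HC')).
  - intros [i Hi]. destruct (Down i Hi) as [k [Hk Hik]]. exists (exist _ k Hk). exact Hik.
  - intros [k Hk]. destruct (Down' k Hk) as [i [Hi Hik]]. exists (exist _ i Hi). exact Hik.
  - intros [i Hi] [k Hk] [j Hj] [m Hm]. exact (maps_upper_cle C C' HC HC' phi psi Hiso i k j m).
  - intros [i Hi] [k Hk] Hik. simpl in *.
    assert (Fib : forall u, idx_of u = i <-> idx_of (phi u) = k).
    { apply (maps_upper_fibre C C' phi psi i k i1 k1 HC HC' Hiso Hik Hi1k1 Hi Hk).
      - intros j Hj. destruct (Down j Hj) as [m [_ Hjm]]. eauto.
      - intros m Hm. destruct (Down' m Hm) as [j [_ Hjm]]. eauto. }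
    split; [exact (fibre_iso C C' phi psi i k Hiso Fib)|].
    destruct (fibre_nonempty C HC i) as [u Hu].
    exact (maps_upper_cr C C' HC HC' phi psi Hiso i k i1 k1 u Hi1k1 Hi Hk Hu (proj1 (Fib u) Hu)).
Qed.

Theorem lemma2p6 (G G' : graph) (C C' : lchain) :
  cograph G -> cograph G' -> graph_iso G G' ->
  ~ robust_has_least G -> ~ robust_has_least G' ->
  reduced C -> reduced C' ->
  graph_iso G (sum_graph C) -> graph_iso G' (sum_graph C') ->
  exists (W : idx C -> Prop) (W' : idx C' -> Prop)
         (h : idx (restrict C W) -> idx (restrict C' W')),
    initial_segment C W /\ infinite_set W /\
    initial_segment C' W' /\ infinite_set W' /\
    lchain_iso (restrict C W) (restrict C' W') h.
Proof.
  intros _ _ [f [g Hiso]] NoLeast NoLeast' HC HC' [f1 [g1 Hiso1]] [f2 [g2 Hiso2]].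
  pose proof (iso_pair_comp _ _ _ _ _ _ _ (iso_pair_sym _ _ f1 g1 Hiso1)
                (iso_pair_comp _ _ _ _ _ _ _ Hiso Hiso2)) as Hphi.
  destruct (maps_upper_exists C C' HC HC' _ _ Hphi) as [i1 [k1 Hi1k1]].
  destruct (lchain_iso_below C C' _ _ i1 k1 HC HC' Hphi Hi1k1) as [h Hh].
  pose proof (reduced_total C HC) as HT. pose proof (reduced_total C' HC') as HT'.
  exists (fun i => clt C i i1), (fun k => clt C' k k1), h.
  split; [|split; [|split; [|split]]].
  - intros i j Hj Hij. exact (cle_clt_trans C HT _ _ _ Hij Hj).
  - exact (infinite_below C HT (no_least_idx G C f1 g1 HC Hiso1 NoLeast) i1).
  - intros k m Hm Hkm. exact (cle_clt_trans C' HT' _ _ _ Hkm Hm).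
  - exact (infinite_below C' HT' (no_least_idx G' C' f2 g2 HC' Hiso2 NoLeast') k1).
  - exact Hh.
Qed.
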